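(* Let $A$ be a finite set of $m$ alternatives and $N=\{1,\dots,n\}$ a set of agents, with preferences ranging over all weak orders on $A$. If there is an anonymous and neutral social decision scheme $f$ that satisfies efficiency and strategyproofness for $m$ alternatives and $n$ agents, then for all $m'\le m$ and $n'\le n$ there is a social decision scheme $f'$ defined for $m'$ alternatives and $n'$ agents that is also anonymous, neutral, efficient, and strategyproof.
   Context: $\mathcal{R}$ denotes the set of all complete and transitive binary relations (weak preferences) on $A$; a preference profile is $R=(\succsim_1,\dots,\succsim_n)\in\mathcal{R}^N$. $\Delta(A)=\{p\in\mathbb{R}_{\ge0}^A:\sum_{x\in A}p(x)=1\}$. A social decision scheme (SDS) is a function $f\colon\mathcal{R}^N\to\Delta(A)$. For $R\in\mathcal{R}^N$, $i\in N$ and $\succsim\in\mathcal{R}$, $R_{i:\succsim}$ denotes the profile obtained from $R$ by replacing $\succsim_i$ with $\succsim$. Anonymity: $f(R)=f(R\circ\sigma)$ for all $R$ and all permutations $\sigma$ of the agents. Neutrality: $f(R)(x)=f(\pi(R))(\pi(x))$ for all $R$, permutations $\pi$ of the alternatives and $x$, where $\pi(R)$ replaces each $\succsim_i$ by $\succsim_i^\pi$ with $\pi(x)\succsim_i^\pi\pi(y)$ iff $x\succsim_i y$. A utility function $u_i\colon A\to\mathbb{R}$ is consistent with $\succsim_i$ if $u_i(x)\ge u_i(y)\iff x\succsim_i y$, extended to lotteries by expectation. A utility representation $u$ assigns to each profile $R$ utility functions $u^R_i$ consistent with $\succsim_i$. Lottery $p$ $u$-dominates $q$ at $R$ if $u^R_i(p)\ge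 u^R_i(q)$ for all $i$, with strict inequality for some $i$. $f$ is efficient if for no profile $R$ is $f(R)$ $u$-dominated at $R$ for every utility representation $u$. $f$ is manipulable if there are $R$, $i$, $\succsim$ with $u^R_i(f(R_{i:\succsim}))>u^R_i(f(R))$ for every utility representation $u$; $f$ is strategyproof if it is not manipulable. *)

(* reals are an arbitrary realType (all are isomorphic to R). *)
From HB Require Import structures.
From mathcomp Require Import all_boot all_order all_fingroup all_algebra.
From mathcomp Require Import reals.
Set Implicit Arguments. Unset Strict Implicit. Unset Printing Implicit Defensive.
Import Order.TTheory GRing.Theory Num.Theory.
Local Open Scope ring_scope.

Definition is_weak_order (m : nat) (r : {ffun 'I_m -> {ffun 'I_m -> bool}}) : bool :=
  [forall x, forall y, r x y || r y x] &&
  [forall x, forall y, forall z, r x y ==> r y z ==> r x z].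

Definition pref (m : nat) := {r : {ffun 'I_m -> {ffun 'I_m -> bool}} | is_weak_order r}.

Definition prefrel (m : nat) (s : pref m) (x y : 'I_m) : bool := sval s x y.

Definition profile (m n : nat) := 'I_n -> pref m.

Definition lottery (R : realType) (m : nat) :=
  {p : {ffun 'I_m -> R} | [forall x, 0 <= p x] && (\sum_x p x == 1)}.

Definition lot (R : realType) (m : nat) (p : lottery R m) (x : 'I_m) : R := sval p x.

Definition SDS (R : realType) (m n : nat) := profile m n -> lottery R m.

Definition upd (m n : nat) (P : profile m n) (i : 'I_n) (s : pref m) : profile m n :=
  fun j => if j == i then s else P j.

Definition anonymous (R : realType) (m n : nat) (f : SDS R m n) : Prop :=
  forall (P : profile m n) (sigma : {perm 'I_n}), f (fun i => P (sigma i)) = f P.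

Lemma perm_weak_order (m : nat) (pi : {perm 'I_m}) (r : {ffun 'I_m -> {ffun 'I_m -> bool}}) :
  is_weak_order r ->
  is_weak_order [ffun a => [ffun b => r (pi^-1 a)%g (pi^-1 b)%g]].
Proof.
case/andP=> /forallP C /forallP T; apply/andP; split.
  apply/forallP=> a; apply/forallP=> b; rewrite !ffunE.
  exact: (forallP (C _)).
apply/forallP=> a; apply/forallP=> b; apply/forallP=> c; rewrite !ffunE.
exact: (forallP (forallP (T _) _)).
Qed.

Definition perm_pref (m : nat) (pi : {perm 'I_m}) (s : pref m) : pref m :=
  exist (fun r => is_weak_order r) _ (perm_weak_order pi (proj2_sig s)).

Definition neutral (R : realType) (m n : nat) (f : SDS R m n) : Prop :=
  forall (P : profile m n) (pi : {perm 'I_m}) (x : 'I_m),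
    lot (f P) x = lot (f (fun i => perm_pref pi (P i))) (pi x).

Definition consistent (R : realType) (m : nat) (s : pref m) (u : 'I_m -> R) : Prop :=
  forall x y, (u y <= u x) <-> prefrel s x y.

Definition EU (R : realType) (m : nat) (u : 'I_m -> R) (p : lottery R m) : R :=
  \sum_x lot p x * u x.

Definition is_urep (R : realType) (m n : nat) (u : profile m n -> 'I_n -> 'I_m -> R) : Prop :=
  forall P i, consistent (P i) (u P i).

Definition udominates (R : realType) (m n : nat) (u : profile m n -> 'I_n -> 'I_m -> R)
  (P : profile m n) (q p : lottery R m) : Prop :=
  (forall i, EU (u P i) p <= EU (u P i) q) /\ (exists i, EU (u P i) p < EU (u P i) q).

Definition efficient (R : realType) (m n : nat) (f : SDS R m n) : Prop :=
  ~ exists P : profile m n,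
      forall u, is_urep u -> exists q : lottery R m, udominates u P q (f P).

Definition manipulable (R : realType) (m n : nat) (f : SDS R m n) : Prop :=
  exists (P : profile m n) (i : 'I_n) (s : pref m),
    forall u, is_urep u -> EU (u P i) (f P) < EU (u P i) (f (upd P i s)).

Definition strategyproof (R : realType) (m n : nat) (f : SDS R m n) : Prop :=
  ~ manipulable f.

From mathcomp Require Import all_boot all_order all_fingroup all_algebra.
From mathcomp Require Import reals.
From mathcomp Require Import lra.
From Stdlib Require Import FunctionalExtensionality.
Set Implicit Arguments. Unset Strict Implicit. Unset Printing Implicit Defensive.
Import Order.TTheory GRing.Theory Num.Theory.
Local Open Scope ring_scope.

(* Given f for m alternatives and n agents, run f on profiles in which the
   m' "real" alternatives are ranked by the first n' agents as in the small
   profile and are strictly above the m - m' dummy alternatives, which are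
   tied, while the remaining n - n' agents are indifferent between all
   alternatives.  Efficiency forces f to put no mass on the dummies (moving
   that mass to a real alternative hurts nobody and strictly helps the first
   agent), so f restricts to an SDS on the small domain.  Anonymity and neutrality
   pass down because permutations of the small sets extend to permutations
   of the large ones that commute with the embedding, and a dominating
   lottery or a manipulation in the small domain lifts verbatim, extra
   agents and dummy alternatives not affecting any expected utility.
   For n' = 0 this breaks down, but then every SDS is efficient and
   strategyproof, and the uniform lottery is anonymous and neutral. *)

Section Lotteries.
Variables (R : realType) (m : nat).
Implicit Types (p q : lottery R m) (v : 'I_m -> R).

Lemma lot_ge0 p x : 0 <= lot p x.
Proof. by case/andP: (svalP p) => /forallP/(_ x). Qed.

Lemma lot_sum p : \sum_x lot p x = 1.
Proof. by case/andP: (svalP p) => _ /eqP. Qed.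

Lemma lotteryP p q : (forall x, lot p x = lot q x) -> p = q.
Proof. by move=> E; apply: val_inj; apply/ffunP. Qed.

Lemma EU_const v c p : (forall x, v x = c) -> EU v p = c.
Proof.
move=> vc; rewrite /EU (eq_bigr (fun x => lot p x * c)) => [|x _]; last by rewrite vc.
by rewrite -mulr_suml lot_sum mul1r.
Qed.

Lemma sum_delta_mul (a : 'I_m) (F : 'I_m -> R) : \sum_z (z == a)%:R * F z = F a.
Proof.
rewrite (bigD1 a) //= eqxx mul1r big1 ?addr0 // => z /negbTE ->; exact: mul0r.
Qed.

Definition move_mass_fun p x y : {ffun 'I_m -> R} :=
  [ffun z => lot p z + lot p x * ((z == y)%:R - (z == x)%:R)].

Lemma sum_move_mass p x y (F : 'I_m -> R) :
  \sum_z move_mass_fun p x y z * F z = \sum_z lot p z * F z + lot p x * (F y - F x).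
Proof.
under eq_bigr do rewrite ffunE mulrDl -mulrA mulrBl.
by rewrite big_split /= -mulr_sumr sumrB !sum_delta_mul.
Qed.

Lemma move_mass_subproof p x y :
  [forall z, 0 <= move_mass_fun p x y z] && (\sum_z move_mass_fun p x y z == 1).
Proof.
apply/andP; split.
  apply/forallP => z; rewrite ffunE.
  have := lot_ge0 p z; have := lot_ge0 p x.
  case: (eqVneq z x) => [->|_]; rewrite ?eqxx; case: (_ == y) => /= *; lra.
have := sum_move_mass p x y (fun _ => 1).
by rewrite subrr mulr0 addr0 !(eq_bigr _ (fun z _ => mulr1 _)) lot_sum => ->.
Qed.

Definition move_mass p x y : lottery R m :=
  exist _ (move_mass_fun p x y) (move_mass_subproof p x y).

Lemma EU_move_mass v p x y : EU v (move_mass p x y) = EU v p + lot p x * (v y - v x).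
Proof. exact: sum_move_mass. Qed.

End Lotteries.

Section NoAgents.
Variable R : realType.

Definition unif_fun (k : nat) : {ffun 'I_k.+1 -> R} := [ffun _ => k.+1%:R^-1].

Lemma unif_subproof k : [forall x, 0 <= unif_fun k x] && (\sum_x unif_fun k x == 1).
Proof.
apply/andP; split; first by apply/forallP => x; rewrite ffunE invr_ge0 ler0n.
under eq_bigr do rewrite ffunE.
by rewrite sumr_const card_ord -[_ *+ _]mulr_natr mulVf // pnatr_eq0.
Qed.

Definition unif k : lottery R k.+1 := exist _ (unif_fun k) (unif_subproof k).

Lemma const_anonymous m n (p : lottery R m) : anonymous (fun _ : profile m n => p).
Proof. by []. Qed.

Lemma unif_neutral k n : neutral (fun _ : profile k.+1 n => unif k).
Proof. by move=> P pi x; rewrite /lot /= !ffunE. Qed.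

Lemma efficient_no_agents m (f : SDS R m 0) : efficient f.
Proof.
move=> [P dom].
have urep0 : is_urep (fun (_ : profile m 0) (i : 'I_0) (_ : 'I_m) => 0 : R) by move=> ? [].
by have [q [_ [[]]]] := dom _ urep0.
Qed.

Lemma strategyproof_no_agents m (f : SDS R m 0) : strategyproof f.
Proof. by move=> [P [[]]]. Qed.

End NoAgents.

Section WidenOrd.
Variables (a b : nat) (h : (a < b)%N).

Lemma widen_ordP (i : 'I_b) : (exists j : 'I_a.+1, i = widen_ord h j) \/ (a < i)%N.
Proof.
case: (ltnP a i) => hi; [by right | left].
by exists (inord i); apply: val_inj; rewrite /= inordK.
Qed.

Lemma sum_widen_ord (R : realType) (F : 'I_b -> R) :
  (forall i : 'I_b, (a < i)%N -> F i = 0) ->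
  \sum_i F i = \sum_(j < a.+1) F (widen_ord h j).
Proof.
move=> F0; rewrite (bigID (fun i : 'I_b => (i < a.+1)%N)) /= [X in _ + X]big1 ?addr0.
  exact: big_ord_narrow.
by move=> i; rewrite -leqNgt; apply: F0.
Qed.

Lemma widen_perm (s : {perm 'I_a.+1}) :
  exists s' : {perm 'I_b},
    (forall j, s' (widen_ord h j) = widen_ord h (s j)) /\
    (forall i : 'I_b, (a < i)%N -> s' i = i).
Proof.
pose g (i : 'I_b) := if (i < a.+1)%N then widen_ord h (s (inord i)) else i.
have g_inj : injective g.
  move=> i i'; rewrite /g; case: ltnP => hi; case: ltnP => hi'.
  - move/(congr1 val) => /= /val_inj /perm_inj /(congr1 (@nat_of_ord _)).
    by rewrite !inordK // => /val_inj.
  - by move=> E; move: hi'; rewrite -E /= leqNgt ltn_ord.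
  - by move=> E; move: hi; rewrite E /= leqNgt ltn_ord.
  - done.
exists (perm g_inj); split => [j|i hi]; rewrite permE /g.
  by rewrite /= ltn_ord inord_val.
by rewrite ltnNge hi.
Qed.

End WidenOrd.

Definition indiff_rel (m : nat) : {ffun 'I_m -> {ffun 'I_m -> bool}} :=
  [ffun _ => [ffun _ => true]].

Lemma indiff_rel_weak_order m : is_weak_order (indiff_rel m).
Proof.
by apply/andP; split; do ![apply/forallP => ?]; rewrite !ffunE.
Qed.

Definition indiff_pref m : pref m := exist _ (indiff_rel m) (indiff_rel_weak_order m).

Lemma prefrel_indiff m (x y : 'I_m) : prefrel (indiff_pref m) x y.
Proof. by rewrite /prefrel /= !ffunE. Qed.

Lemma perm_pref_indiff m (pi : {perm 'I_m}) : perm_pref pi (indiff_pref m) = indiff_pref m.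
Proof. by apply: val_inj; apply/ffunP => x; apply/ffunP => y; rewrite !ffunE. Qed.

Section Embedding.
Variables (R : realType) (m n k l : nat).
Hypotheses (hk : (k < m)%N) (hl : (l < n)%N).

Local Notation wm := (widen_ord hk).
Local Notation wn := (widen_ord hl).

Definition ext_rel (r : {ffun 'I_k.+1 -> {ffun 'I_k.+1 -> bool}}) :
    {ffun 'I_m -> {ffun 'I_m -> bool}} :=
  [ffun x : 'I_m => [ffun y : 'I_m =>
    (k < y)%N || ((x <= k)%N && r (inord x) (inord y))]].

Lemma ext_rel_weak_order r : is_weak_order r -> is_weak_order (ext_rel r).
Proof.
case/andP=> /forallP total /forallP trans; apply/andP; split.
  apply/forallP=> x; apply/forallP=> y; rewrite !ffunE.
  case: (ltnP k y) => //= hy; case: (ltnP k x) => //= hx.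
  exact: (forallP (total _)).
apply/forallP=> x; apply/forallP=> y; apply/forallP=> z; rewrite !ffunE.
case: (ltnP k z) => hz /=; first by rewrite !implybT.
case: (ltnP k y) => hy //=; case: (ltnP k x) => hx //=.
exact: (forallP (forallP (trans _) _)).
Qed.

Definition ext_pref (s : pref k.+1) : pref m :=
  exist _ (ext_rel (sval s)) (ext_rel_weak_order (svalP s)).

Lemma prefrel_ext_pref s x y : prefrel (ext_pref s) (wm x) (wm y) = prefrel s x y.
Proof. by rewrite /prefrel /= !ffunE /= leqNgt !ltn_ord -ltnS ltn_ord !inord_val. Qed.

Lemma prefrel_ext_pref_dummy s (x y : 'I_m) : (k < x)%N -> prefrel (ext_pref s) y x.
Proof. by rewrite /prefrel /= !ffunE => ->. Qed.

Lemma prefrel_dummy_ext_pref s (x : 'I_m) y : (k < x)%N -> ~~ prefrel (ext_pref s) x (wm y).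
Proof.
rewrite /prefrel /= !ffunE /= => hx.
by rewrite [(x <= k)%N]leqNgt hx ltnNge -ltnS ltn_ord.
Qed.

Lemma ext_pref_perm (p : {perm 'I_k.+1}) (p' : {perm 'I_m}) :
  (forall x, p' (wm x) = wm (p x)) -> (forall x : 'I_m, (k < x)%N -> p' x = x) ->
  forall s, ext_pref (perm_pref p s) = perm_pref p' (ext_pref s).
Proof.
move=> p'w p'dummy s; apply: val_inj => /=; apply/ffunP => a; apply/ffunP => b.
have [x ->] : exists x, a = p' x by exists (p'^-1 a)%g; rewrite permKV.
have [y ->] : exists y, b = p' y by exists (p'^-1 b)%g; rewrite permKV.
rewrite !ffunE !permK.
have real_le (z : 'I_k.+1) : (z <= k)%N by rewrite -ltnS ltn_ord.
have real_gt (z : 'I_k.+1) : (k < z)%N = false by rewrite ltnNge real_le.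
case: (widen_ordP hk y) => [[y' ->]|hy]; last by rewrite p'dummy // hy.
rewrite p'w /= !real_gt /=.
case: (widen_ordP hk x) => [[x' ->]|hx]; last by rewrite p'dummy // leqNgt hx.
by rewrite p'w /= !real_le !inord_val !permK.
Qed.

Definition ext_profile (Q : profile k.+1 l.+1) : profile m n :=
  fun i => if (i <= l)%N then ext_pref (Q (inord i)) else indiff_pref m.

Lemma ext_profile_widen Q j : ext_profile Q (wn j) = ext_pref (Q j).
Proof. by rewrite /ext_profile /= -ltnS ltn_ord inord_val. Qed.

Lemma ext_profile_extra Q (i : 'I_n) : (l < i)%N -> ext_profile Q i = indiff_pref m.
Proof. by rewrite /ext_profile ltnNge => /negbTE ->. Qed.

Lemma ext_profile_upd Q j s :
  upd (ext_profile Q) (wn j) (ext_pref s) = ext_profile (upd Q j s).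
Proof.
apply: functional_extensionality => i; rewrite /upd.
case: (widen_ordP hl i) => [[j' ->]|hi].
  have -> : (wn j' == wn j) = (j' == j) by rewrite -val_eqE /= val_eqE.
  by rewrite !ext_profile_widen /upd; case: eqP.
have -> : (i == wn j) = false.
  by apply: contraTF hi => /eqP ->; rewrite /= ltnNge negbK -ltnS ltn_ord.
by rewrite !ext_profile_extra.
Qed.

Lemma ext_profile_perm_agents Q (s : {perm 'I_l.+1}) (s' : {perm 'I_n}) :
  (forall j, s' (wn j) = wn (s j)) -> (forall i : 'I_n, (l < i)%N -> s' i = i) ->
  ext_profile (fun j => Q (s j)) = fun i => ext_profile Q (s' i).
Proof.
move=> s'w s'extra; apply: functional_extensionality => i.
case: (widen_ordP hl i) => [[j ->]|hi]; first by rewrite s'w !ext_profile_widen.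
by rewrite s'extra // !ext_profile_extra.
Qed.

Lemma ext_profile_perm_alts Q (p : {perm 'I_k.+1}) (p' : {perm 'I_m}) :
  (forall x, p' (wm x) = wm (p x)) -> (forall x : 'I_m, (k < x)%N -> p' x = x) ->
  ext_profile (fun j => perm_pref p (Q j)) = fun i => perm_pref p' (ext_profile Q i).
Proof.
move=> p'w p'dummy; apply: functional_extensionality => i.
case: (widen_ordP hl i) => [[j ->]|hi].
  by rewrite !ext_profile_widen (ext_pref_perm p'w).
by rewrite !ext_profile_extra // perm_pref_indiff.
Qed.

Definition restr_urep (u : profile m n -> 'I_n -> 'I_m -> R) :
    profile k.+1 l.+1 -> 'I_l.+1 -> 'I_k.+1 -> R :=
  fun Q j y => u (ext_profile Q) (wn j) (wm y).

Lemma is_urep_restr (u : profile m n -> 'I_n -> 'I_m -> R) :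
  is_urep u -> is_urep (restr_urep u).
Proof.
by move=> hu Q j x y; rewrite -prefrel_ext_pref -ext_profile_widen; apply: hu.
Qed.

Lemma urep_extra_indiff (u : profile m n -> 'I_n -> 'I_m -> R) Q (i : 'I_n) :
  is_urep u -> (l < i)%N -> forall x, u (ext_profile Q) i x = u (ext_profile Q) i (wm ord0).
Proof.
move=> hu hi x; apply/le_anti/andP.
by split; apply/(hu (ext_profile Q) i); rewrite ext_profile_extra ?prefrel_indiff.
Qed.

Definition lift_fun (q : lottery R k.+1) : {ffun 'I_m -> R} :=
  [ffun x : 'I_m => if (x <= k)%N then lot q (inord x) else 0].

Lemma lift_fun_widen q y : lift_fun q (wm y) = lot q y.
Proof. by rewrite ffunE /= -ltnS ltn_ord inord_val. Qed.

Lemma lift_fun_dummy q (x : 'I_m) : (k < x)%N -> lift_fun q x = 0.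
Proof. by rewrite ffunE ltnNge => /negbTE ->. Qed.

Lemma lift_subproof q : [forall x, 0 <= lift_fun q x] && (\sum_x lift_fun q x == 1).
Proof.
apply/andP; split.
  by apply/forallP => x; rewrite ffunE; case: ifP => _ //; rewrite lot_ge0.
rewrite (sum_widen_ord hk (lift_fun_dummy q)) -(lot_sum q); apply/eqP.
by apply: eq_bigr => y _; rewrite lift_fun_widen.
Qed.

Definition lift_lottery q : lottery R m := exist _ (lift_fun q) (lift_subproof q).

Lemma EU_lift (v : 'I_m -> R) q : EU v (lift_lottery q) = EU (v \o wm) q.
Proof.
rewrite /EU (sum_widen_ord hk) => [|x hx]; last by rewrite /lot /= lift_fun_dummy ?mul0r.
by apply: eq_bigr => y _; rewrite /lot /= lift_fun_widen.
Qed.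

Section Restriction.
Variables (p : lottery R m) (p_dummy0 : forall x : 'I_m, (k < x)%N -> lot p x = 0).

Definition restr_fun : {ffun 'I_k.+1 -> R} := [ffun y => lot p (wm y)].

Lemma restr_subproof : [forall y, 0 <= restr_fun y] && (\sum_y restr_fun y == 1).
Proof.
apply/andP; split; first by apply/forallP => y; rewrite ffunE lot_ge0.
rewrite -(lot_sum p) (sum_widen_ord hk p_dummy0).
by apply/eqP; apply: eq_bigr => y _; rewrite ffunE.
Qed.

Definition restr_lottery : lottery R k.+1 := exist _ restr_fun restr_subproof.

Lemma EU_restr (v : 'I_m -> R) : EU v p = EU (v \o wm) restr_lottery.
Proof.
rewrite /EU (sum_widen_ord hk) => [|x hx]; last by rewrite p_dummy0 ?mul0r.
by apply: eq_bigr => y _; rewrite /lot /= ffunE.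
Qed.

End Restriction.

End Embedding.

Section Reduction.
Variables (R : realType) (m n k l : nat).
Hypotheses (hk : (k < m)%N) (hl : (l < n)%N).
Variable f : SDS R m n.
Hypothesis f_eff : efficient f.

Local Notation wm := (widen_ord hk).
Local Notation wn := (widen_ord hl).
Local Notation ext_profile := (@ext_profile m n k l).

Lemma efficient_dummy0 Q (x : 'I_m) : (k < x)%N -> lot (f (ext_profile Q)) x = 0.
Proof.
move=> hx; apply: contra_not_eq f_eff => px_neq0.
exists (ext_profile Q) => u hu; exists (move_mass (f (ext_profile Q)) x (wm ord0)).
have px_gt0 : 0 < lot (f (ext_profile Q)) x by rewrite lt_def px_neq0 lot_ge0.
split => [i|]; rewrite ?EU_move_mass.
  rewrite lerDl mulr_ge0 ?lot_ge0 // subr_ge0; apply/(hu _ i).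
  case: (widen_ordP hl i) => [[j ->]|hi].
    by rewrite ext_profile_widen prefrel_ext_pref_dummy.
  by rewrite ext_profile_extra // prefrel_indiff.
exists (wn ord0); rewrite EU_move_mass ltrDl mulr_gt0 // subr_gt0 ltNge.
apply/negP => /(hu _ (wn ord0) x (wm ord0)); rewrite ext_profile_widen.
exact/negP/prefrel_dummy_ext_pref.
Qed.

Definition restr_sds : SDS R k.+1 l.+1 :=
  fun Q => restr_lottery hk (efficient_dummy0 Q).

Lemma EU_restr_sds (v : 'I_m -> R) Q :
  EU v (f (ext_profile Q)) = EU (v \o wm) (restr_sds Q).
Proof. exact: EU_restr. Qed.

Lemma restr_sds_anonymous : anonymous f -> anonymous restr_sds.
Proof.
move=> f_anon Q s; have [s' [s'w s'extra]] := widen_perm hl s.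
apply: lotteryP => y; rewrite /lot /= !ffunE.
by rewrite (ext_profile_perm_agents m _ s'w s'extra) f_anon.
Qed.

Lemma restr_sds_neutral : neutral f -> neutral restr_sds.
Proof.
move=> f_neu Q p x; have [p' [p'w p'dummy]] := widen_perm hk p.
rewrite /lot /= !ffunE (ext_profile_perm_alts hl _ p'w p'dummy) -p'w.
exact: f_neu.
Qed.

Lemma restr_sds_efficient : efficient restr_sds.
Proof.
move=> [Q dom]; apply: f_eff; exists (ext_profile Q) => u hu.
have [q [le_q [j lt_q]]] := dom _ (is_urep_restr hk hl hu).
exists (lift_lottery hk q); split => [i|].
  case: (widen_ordP hl i) => [[j' ->]|hi].
    by rewrite EU_restr_sds EU_lift; apply: le_q.
  by rewrite !(EU_const _ (urep_extra_indiff hk Q hu hi)).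
by exists (wn j); rewrite EU_restr_sds EU_lift; apply: lt_q.
Qed.

Lemma restr_sds_strategyproof : strategyproof f -> strategyproof restr_sds.
Proof.
move=> f_sp [Q [j [s manip]]]; apply: f_sp.
exists (ext_profile Q), (wn j), (ext_pref m s) => u hu.
rewrite ext_profile_upd !EU_restr_sds; exact: manip _ (is_urep_restr hk hl hu).
Qed.

End Reduction.

Theorem lemma4p1 (R : realType) (m n : nat) (f : SDS R m n) :
  anonymous f -> neutral f -> efficient f -> strategyproof f ->
  forall m' n' : nat, (0 < m')%N -> (m' <= m)%N -> (n' <= n)%N ->
  exists f' : SDS R m' n',
    anonymous f' /\ neutral f' /\ efficient f' /\ strategyproof f'.
Proof.
move=> f_anon f_neu f_eff f_sp [|k] // [|l] _ hk hl.
  exists (fun _ => unif R k); split; first exact: const_anonymous.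
  split; first exact: unif_neutral.
  by split; [apply: efficient_no_agents | apply: strategyproof_no_agents].
exists (restr_sds hk hl f_eff); split; first exact: restr_sds_anonymous.
split; first exact: restr_sds_neutral.
by split; [apply: restr_sds_efficient | apply: restr_sds_strategyproof].
Qed.
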